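(* Let $P\subset\mathbb{R}^d$ be a full-dimensional lattice polytope with codegree $a$. If $P$ is nearly Gorenstein, then $P=\lfloor aP\rfloor+\{P\}$ (Minkowski sum).
   Context: $\mathbf{k}$ is an infinite field. $P$ has facet presentation $P=\{x: n_F(x)\ge -h_F\ \forall \text{ facets } F\}$ with $n_F\in(\mathbb{Z}^d)^*$ primitive inner normals and $h_F\in\mathbb{Z}$. The codegree is $a=\min\{k\in\mathbb{Z}_{\ge1}: \mathrm{int}(kP)\cap\mathbb{Z}^d\ne\varnothing\}$. For a lattice polytope $Q$, $\lfloor Q\rfloor=\mathrm{conv}(\mathrm{int}(Q)\cap\mathbb{Z}^d)$ (floor polytope). The remainder polytope is $\{P\}=\mathrm{conv}\{x\in\mathbb{Z}^d: n_F(x)\ge (a-1)h_F-1\ \forall F\}$. The Minkowski sum is $A+B=\{x+y: x\in A, y\in B\}$. $P$ is nearly Gorenstein if its Ehrhart ring $A(P)=\mathbf{k}[\mathbf{t}^xs^k: k\in\mathbb{N}, x\in kP\cap\mathbb{Z}^d]$ (graded by $k$, graded maximal ideal $\mathbf{m}$, canonical module $\omega$) satisfies $\mathbf{m}\subseteq \mathrm{tr}(\omega)=\sum_{\phi\in\mathrm{Hom}(\omega,A(P))}\phi(\omega)$. *)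

From HB Require Import structures.
From mathcomp Require Import all_boot all_order all_algebra.
From mathcomp Require Import reals.
From mathcomp.multinomials Require Import freeg.
Set Implicit Arguments. Unset Strict Implicit. Unset Printing Implicit Defensive.
Import Order.TTheory GRing.Theory Num.Theory.
Local Open Scope ring_scope.

Section Geometry.
Variables (R : realType) (d : nat).
Local Notation pt := 'rV[R]_d.

Definition lat (z : 'rV[int]_d) : pt := map_mx (fun n : int => n%:~R) z.

Definition conv (S : pt -> Prop) (x : pt) : Prop :=
  exists (n : nat) (p : 'I_n -> pt) (l : 'I_n -> R),
    (forall i, S (p i)) /\ (forall i, 0 <= l i) /\
    \sum_(i < n) l i = 1 /\ x = \sum_(i < n) l i *: p i.

Definition dil (c : R) (S : pt -> Prop) (y : pt) : Prop :=
  exists x, S x /\ y = c *: x.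

(* topological interior in R^d (sup-norm balls, same topology) *)
Definition interior (S : pt -> Prop) (x : pt) : Prop :=
  exists e : R, 0 < e /\
    forall y : pt, (forall i, `|y 0 i - x 0 i| < e) -> S y.

Definition mink (A B : pt -> Prop) (z : pt) : Prop :=
  exists x y, A x /\ B y /\ z = x + y.

Definition lattice_polytope (P : pt -> Prop) : Prop :=
  exists V : seq 'rV[int]_d,
    forall x, P x <-> conv (fun y => exists2 v, v \in V & y = lat v) x.

Definition full_dimensional (P : pt -> Prop) : Prop := exists x, interior P x.

Definition floor_poly (Q : pt -> Prop) : pt -> Prop :=
  conv (fun y => exists z, interior Q (lat z) /\ y = lat z).

Definition lin (n : 'rV[int]_d) (x : pt) : R := \sum_(i < d) (n 0 i)%:~R * x 0 i.

Definition primitive (n : 'rV[int]_d) : Prop :=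
  forall (c : int) (m : 'rV[int]_d), n = c *: m -> `|c| = 1.

(* Fs is the facet presentation of P: P = {x : n_F(x) >= -h_F}, normals
   primitive, and every inequality irredundant (so each defines a facet). *)
Definition facet_presentation (P : pt -> Prop)
    (Fs : seq ('rV[int]_d * int)) : Prop :=
  (forall x, P x <-> (forall F, F \in Fs -> lin F.1 x >= - (F.2%:~R))) /\
  (forall F, F \in Fs -> primitive F.1) /\
  (forall F, F \in Fs -> exists x,
       lin F.1 x < - (F.2%:~R) /\
       (forall G, G \in Fs -> G != F -> lin G.1 x >= - (G.2%:~R))).

Definition is_codegree (P : pt -> Prop) (a : nat) : Prop :=
  (1 <= a)%N /\ (exists z, interior (dil a%:R P) (lat z)) /\
  (forall k : nat, (1 <= k < a)%N -> ~ exists z, interior (dil k%:R P) (lat z)).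

Definition remainder_poly (Fs : seq ('rV[int]_d * int)) (a : nat) : pt -> Prop :=
  conv (fun y => exists z, y = lat z /\
     forall F, F \in Fs -> lin F.1 (lat z) >= ((a%:Z - 1) * F.2 - 1)%:~R).

End Geometry.

(* Algebraic side: the Laurent polynomial ring k[t_1^±,...,t_d^±, s^±]   *)
(* as the group algebra of Z^d x Z, realised as the free k-module on     *)
(* keys (x, j) (standing for t^x s^j), with multiplication extended      *)
(* bilinearly from t^x s^j * t^y s^l = t^(x+y) s^(j+l).                  *)
Section Ehrhart.
Variables (k : fieldType) (d : nat).

Definition key := ('rV[int]_d * int)%type.
Definition laurent := {freeg key / k}.

Definition lmul (f g : laurent) : laurent :=
  fglift (fun a : key =>
            fglift (fun b : key => << (a.1 + b.1, a.2 + b.2) >> : laurent) g) f.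

Variable (R : realType).
Variable (P : 'rV[R]_d -> Prop).

Definition in_ehrhart (f : laurent) : Prop :=
  forall e : key, e \in dom f -> 0 <= e.2 /\ dil (e.2%:~R) P (lat R e.1).

Definition in_maxideal (f : laurent) : Prop :=
  in_ehrhart f /\ forall e : key, e \in dom f -> 0 < e.2.

(* canonical module ω of A(P) (Danilov–Stanley):
   span{ t^x s^j : j >= 1, x in int(jP) ∩ Z^d }, an ideal of A(P) *)
Definition in_canonical (f : laurent) : Prop :=
  forall e : key, e \in dom f -> 0 < e.2 /\ interior (dil (e.2%:~R) P) (lat R e.1).

Definition is_hom_canonical (phi : laurent -> laurent) : Prop :=
  (forall w, in_canonical w -> in_ehrhart (phi w)) /\
  (forall w1 w2, in_canonical w1 -> in_canonical w2 ->
      phi (w1 + w2) = phi w1 + phi w2) /\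
  (forall r w, in_ehrhart r -> in_canonical w ->
      phi (lmul r w) = lmul r (phi w)).

Definition in_trace (f : laurent) : Prop :=
  exists (n : nat) (phi : 'I_n -> laurent -> laurent) (w : 'I_n -> laurent),
    (forall i, is_hom_canonical (phi i) /\ in_canonical (w i)) /\
    f = \sum_(i < n) phi i (w i).

Definition nearly_gorenstein : Prop :=
  forall f, in_maxideal f -> in_trace f.

End Ehrhart.

Definition infinite_field (k : fieldType) : Prop :=
  forall s : seq k, exists x : k, x \notin s.

From HB Require Import structures.
From mathcomp Require Import all_boot all_order all_algebra.
From mathcomp Require Import reals.
From mathcomp.multinomials Require Import freeg.
From mathcomp Require Import zify ring lra.
Set Implicit Arguments. Unset Strict Implicit. Unset Printing Implicit Defensive.
Import Order.TTheory GRing.Theory Num.Theory.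
Local Open Scope ring_scope.

(* P is the convex hull of its lattice points, so it suffices to split every
   lattice point v of P as y + r with y an interior lattice point of aP and r a
   lattice point of {P}; the reverse inclusion is the sum of the facet
   inequalities of floor(aP) and {P}.  As t^v s lies in the graded maximal
   ideal, near-Gorensteinness yields phi : omega -> A(P) and a monomial
   t^z s^j of omega such that phi(t^z s^j) involves t^v s.  By A(P)-linearity
   the Laurent monomial t^(v-z) s^(1-j) then maps every monomial of omega into
   A(P).  Testing this on an interior lattice point of aP gives j <= a + 1 (and
   j >= a is the codegree), and testing it on interior lattice points at lattice
   distance one from a facet F (they exist since n_F is primitive) gives
   n_F(v - z) >= (j - 1) h_F - 1.  For j = a take y = z; for j = a + 1 the first
   test forces z = v + y0 with y0 in int(aP), and y = y0 works. *)

Lemma ler_sum_mem (T : eqType) (V : numDomainType) (s : seq T) (f : T -> V) x :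
  (forall y, 0 <= f y) -> x \in s -> f x <= \sum_(y <- s) f y.
Proof. by move=> f_ge0 xs; rewrite (big_rem x) //= lerDl sumr_ge0. Qed.

Lemma sum_neq0_exists (V : nmodType) (I : eqType) (r : seq I) (F : I -> V) :
  \sum_(i <- r) F i != 0 -> exists2 i, i \in r & F i != 0.
Proof.
move=> sum_neq0; apply/hasP; apply: contraNT sum_neq0 => /hasPn F0.
by rewrite big_seq big1 // => i /F0; rewrite negbK => /eqP.
Qed.

Section LinearForms.
Variables (R : realType) (d : nat).
Local Notation pt := 'rV[R]_d.

Definition ilin (n v : 'rV[int]_d) : int := \sum_(i < d) n 0 i * v 0 i.

Lemma lin_lat n v : lin n (lat R v) = (ilin n v)%:~R.
Proof.
rewrite /lin /ilin rmorph_sum; apply: eq_bigr => i _.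
by rewrite /lat mxE rmorphM.
Qed.

Lemma ilinD n u v : ilin n (u + v) = ilin n u + ilin n v.
Proof. by rewrite /ilin -big_split; apply: eq_bigr => i _; rewrite mxE mulrDr. Qed.

Lemma ilinZ n c v : ilin n (c *: v) = c * ilin n v.
Proof. by rewrite /ilin mulr_sumr; apply: eq_bigr => i _; rewrite mxE mulrCA. Qed.

Lemma ilinN n v : ilin n (- v) = - ilin n v.
Proof. by rewrite -scaleN1r ilinZ mulN1r. Qed.

Lemma ilinB n u v : ilin n (u - v) = ilin n u - ilin n v.
Proof. by rewrite ilinD ilinN. Qed.

Lemma ilin0 n : ilin n 0 = 0.
Proof. by rewrite /ilin big1 // => i _; rewrite mxE mulr0. Qed.

Lemma ilin_sum n (I : finType) (Q : pred I) (F : I -> 'rV[int]_d) :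
  ilin n (\sum_(i | Q i) F i) = \sum_(i | Q i) ilin n (F i).
Proof. exact: (big_morph (ilin n) (ilinD n) (ilin0 n)). Qed.

Lemma linD n (x y : pt) : lin n (x + y) = lin n x + lin n y.
Proof. by rewrite /lin -big_split; apply: eq_bigr => i _; rewrite mxE mulrDr. Qed.

Lemma linZ n c (x : pt) : lin n (c *: x) = c * lin n x.
Proof. by rewrite /lin mulr_sumr; apply: eq_bigr => i _; rewrite mxE mulrCA. Qed.

Lemma lin_sum n m (l : 'I_m -> R) (p : 'I_m -> pt) :
  lin n (\sum_(i < m) l i *: p i) = \sum_(i < m) l i * lin n (p i).
Proof.
rewrite /lin; under eq_bigr do rewrite summxE mulr_sumr.
rewrite exchange_big; apply: eq_bigr => i _ /=.
by rewrite mulr_sumr; apply: eq_bigr => j _; rewrite mxE mulrCA.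
Qed.

Lemma lin_ge_box (n : 'rV[int]_d) (y : pt) e :
  (forall i, `|y 0 i| <= e) -> - (e * \sum_i `|(n 0 i)%:~R : R|) <= lin n y.
Proof.
move=> y_le; rewrite /lin mulr_sumr -sumrN; apply: ler_sum => i _.
have : `|(n 0 i)%:~R * y 0 i| <= e * `|(n 0 i)%:~R : R|.
  by rewrite normrM mulrC ler_wpM2r.
by rewrite ler_norml => /andP[].
Qed.

Lemma latD (u v : 'rV[int]_d) : lat R (u + v) = lat R u + lat R v.
Proof. by apply/matrixP => i j; rewrite !mxE rmorphD. Qed.

Lemma lat0 : lat R (0 : 'rV[int]_d) = 0.
Proof. by apply/matrixP => i j; rewrite !mxE. Qed.

Lemma lat_inj : injective (@lat R d).
Proof.
move=> u v /matrixP uv; apply/matrixP => i j.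
by have := uv i j; rewrite !mxE => /intr_inj.
Qed.

End LinearForms.

Section Convexity.
Variables (R : realType) (d : nat).
Local Notation pt := 'rV[R]_d.
Implicit Types S A B : pt -> Prop.

Lemma conv_lin_ge S n c x :
  conv S x -> (forall p, S p -> c <= lin n p) -> c <= lin n x.
Proof.
case=> m [p [l [Sp [l_ge0 [l_sum1 ->]]]]] S_ge; rewrite lin_sum.
rewrite -[c]mul1r -l_sum1 mulr_suml; apply: ler_sum => i _.
exact/ler_wpM2l/S_ge.
Qed.

Lemma conv_mink_sub S A B x :
  (forall p, S p -> mink A B p) -> conv S x -> mink (conv A) (conv B) x.
Proof.
move=> S_mink [m [p [l [Sp [l_ge0 [l_sum1 ->]]]]]].
have [yr yrP] : exists yr : 'I_m -> pt * pt,
    forall i, A (yr i).1 /\ B (yr i).2 /\ p i = (yr i).1 + (yr i).2.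
  apply: (@fin_all_exists _ (fun _ => (pt * pt)%type) (fun i (yr : pt * pt) => A yr.1 /\ B yr.2 /\ p i = yr.1 + yr.2)).
  by move=> i; have [y [r yr]] := S_mink _ (Sp i); exists (y, r).
exists (\sum_i l i *: (yr i).1), (\sum_i l i *: (yr i).2); split.
  by exists m, (fun i => (yr i).1), l; split => // i; case: (yrP i).
split; first by exists m, (fun i => (yr i).2), l; split => // i; case: (yrP i) => _ [].
by rewrite -big_split; apply: eq_bigr => i _; case: (yrP i) => _ [_ ->]; rewrite scalerDr.
Qed.

Lemma conv_lattice (V : seq 'rV[int]_d) x :
  conv (fun y => exists2 v, v \in V & y = lat R v) x ->
  exists m (v : 'I_m -> 'rV[int]_d) (l : 'I_m -> R),
    (forall i, v i \in V) /\ (forall i, 0 <= l i) /\ \sum_i l i = 1 /\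
    x = \sum_i l i *: lat R (v i).
Proof.
case=> m [p [l [Sp [l_ge0 [l_sum1 ->]]]]].
have [v vP] : exists v : 'I_m -> 'rV[int]_d, forall i, v i \in V /\ p i = lat R (v i).
  apply: (@fin_all_exists _ (fun _ => 'rV[int]_d) (fun i v => v \in V /\ p i = lat R v)) => i.
  by have [v ? ?] := Sp i; exists v.
exists m, v, l; split; first by move=> i; case: (vP i).
by do 2!split => //; apply: eq_bigr => i _; case: (vP i) => _ ->.
Qed.

Lemma interior_mem S x : interior S x -> S x.
Proof. by case=> e [e_gt0 S_ball]; apply: S_ball => i; rewrite subrr normr0. Qed.

Lemma interior_lin_gt S n c x : n != 0 ->
  (forall y, S y -> c <= lin n y) -> interior S x -> c < lin n x.
Proof.
move=> n_neq0 S_ge [e [e_gt0 S_ball]].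
pose sg : pt := \row_i Num.sg ((n 0 i)%:~R : R).
have lin_sg : lin n sg = \sum_i `|(n 0 i)%:~R : R|.
  by apply: eq_bigr => i _; rewrite mxE normrEsg mulrC.
have [i ni] : exists i, n 0 i != 0.
  apply/existsP; apply: contraR n_neq0 => /existsPn n0.
  by apply/eqP/matrixP => i j; rewrite ord1 mxE; apply/eqP/negbNE/n0.
have sg_gt0 : 0 < lin n sg.
  by rewrite lin_sg (bigD1 i) //= ltr_pwDl ?sumr_ge0 // normr_gt0 intr_eq0.
have : c <= lin n (x - (e / 2) *: sg).
  apply/S_ge/S_ball => j; rewrite !mxE addrAC subrr add0r normrN normrM.
  have sg_le1 : `|Num.sg ((n 0 j)%:~R : R)| <= 1 by rewrite normr_sg; case: (_ != 0).
  have sg_ge0 := normr_ge0 (Num.sg ((n 0 j)%:~R : R)).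
  rewrite ger0_norm; [nra | lra].
rewrite linD -scaleN1r !linZ mulN1r.
have : 0 < e / 2 * lin n sg by rewrite mulr_gt0 // divr_gt0.
lra.
Qed.

Lemma dil0_eq0 S y : dil 0 S y -> y = 0.
Proof. by case=> x [_ ->]; rewrite scale0r. Qed.

End Convexity.

Lemma primitive_neq0 d (n : 'rV[int]_d) : primitive n -> n != 0.
Proof. by move=> n_prim; apply/eqP => n0; have := n_prim 2 n; rewrite {2}n0 scaler0 => /(_ n0). Qed.

Lemma primitive_ilin_eq1 d (n : 'rV[int]_d) : primitive n -> exists w, ilin n w = 1.
Proof.
move=> n_prim; have [L L_unit [M M_unit [s _ nE]]] := int_Smith_normal_form n.
pose e0 : 'rV[int]_d := \row_j ((j == 0 :> nat)%:R).
pose c := L 0 0 * s`_0.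
have n_e0 : n = c *: (e0 *m M).
  rewrite nE scalemxAl; congr (_ *m _); apply/matrixP => i j.
  rewrite ord1 !mxE big_ord1 !mxE /= /c eq_sym.
  by case: (_ == _); rewrite ?mulr1n ?mulr0n ?mulr1 ?mulr0.
have c_unit : `|c| = 1 := n_prim c _ n_e0.
have [j0 _] : exists j, n 0 j != 0.
  apply/existsP; apply: contraR (primitive_neq0 n_prim) => /existsPn n0.
  by apply/eqP/matrixP => i j; rewrite ord1 mxE; apply/eqP/negbNE/n0.
have d_gt0 : (0 < d)%N by apply: leq_ltn_trans (leq0n j0) (ltn_ord j0).
have e0_norm : (e0 *m e0^T) 0 0 = 1.
  rewrite mxE (bigD1 (Ordinal d_gt0)) //= big1 ?addr0 => [|j j_neq0]; rewrite !mxE //=.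
  have : (j : nat) != 0%N by apply: contra j_neq0 => /eqP j0'; apply/eqP/val_inj.
  by move/negbTE => ->; rewrite mul0r.
pose w := (invmx M *m e0^T)^T.
have ilin_w : ilin n w = c.
  have -> : ilin n w = (n *m w^T) 0 0.
    by rewrite /ilin mxE; apply: eq_bigr => i _; rewrite !mxE.
  by rewrite trmxK n_e0 -scalemxAl mxE -mulmxA (mulmxA M) mulmxV // mul1mx e0_norm mulr1.
exists (c *: w); rewrite ilinZ ilin_w.
by have [->|->] : c = 1 \/ c = -1 by lia.
Qed.

Lemma psumr_weighted_eq0 (V : numDomainType) (I : finType) (l s : I -> V) :
  (forall i, 0 <= l i) -> (forall i, 0 <= s i) ->
  (\sum_i l i * s i == 0) = [forall i, (0 < l i) ==> (s i == 0)].
Proof.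
move=> l_ge0 s_ge0; rewrite psumr_eq0 => [|i _]; last exact: mulr_ge0.
have lsE i : (l i * s i == 0) = (0 < l i) ==> (s i == 0).
  by rewrite mulf_eq0 lt0r l_ge0 andbT; case: (l i == 0).
by apply/allP/forallP => ls0 i; [rewrite -lsE; exact: ls0 | rewrite lsE ls0].
Qed.

Section Polytope.
Variables (R : realType) (d : nat) (P : 'rV[R]_d -> Prop) (Fs : seq ('rV[int]_d * int)).
Hypothesis P_ineq : forall x, P x <-> (forall F, F \in Fs -> lin F.1 x >= - (F.2%:~R)).
Hypothesis Fs_primitive : forall F, F \in Fs -> primitive F.1.

Lemma dil_lin_ge t y F : 0 <= t -> dil t P y -> F \in Fs -> - (t * F.2%:~R) <= lin F.1 y.
Proof.
move=> t_ge0 [x [Px ->]] HF; rewrite linZ -mulrN.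
exact/ler_wpM2l/(proj1 (P_ineq x) Px).
Qed.

Lemma lat_slack_ge0 v F : P (lat R v) -> F \in Fs -> 0 <= ilin F.1 v + F.2.
Proof.
move=> Pv HF; rewrite -lerBlDr sub0r -(ler_int R) rmorphN -lin_lat.
exact: (proj1 (P_ineq _) Pv).
Qed.

Lemma ilin_gt_interior_dil (t : int) z : 0 < t ->
  (forall F, F \in Fs -> - (t * F.2) < ilin F.1 z) -> interior (dil t%:~R P) (lat R z).
Proof.
move=> t_gt0 z_gt.
have tR_gt0 : (0 : R) < t%:~R by rewrite ltr0z.
pose S := \sum_(F <- Fs) \sum_i `|(F.1 0 i)%:~R : R|.
have S_ge0 : 0 <= S by apply: sumr_ge0 => F _; apply: sumr_ge0.
exists (1 + S)^-1; split; first by rewrite invr_gt0; lra.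
move=> y y_near; exists ((t%:~R)^-1 *: y); split; last first.
  by rewrite scalerA mulfV ?scale1r // gt_eqF.
apply/P_ineq => F HF; rewrite linZ -(ler_pM2l tR_gt0) mulrA mulfV ?gt_eqF // mul1r mulrN.
set sF := \sum_i `|(F.1 0 i)%:~R : R|.
have sF_le : sF <= S.
  apply: (ler_sum_mem (f := fun G : 'rV[int]_d * int => \sum_i `|(G.1 0 i)%:~R : R|)) HF.
  by move=> G; apply: sumr_ge0.
have dev_ge : - ((1 + S)^-1 * sF) <= lin F.1 (y - lat R z).
  by apply: lin_ge_box => i; rewrite !mxE; apply: ltW; have := y_near i; rewrite mxE.
have dev_lt1 : (1 + S)^-1 * sF < 1 by rewrite mulrC ltr_pdivrMr; lra.
have zF : (- (t * F.2) + 1)%:~R <= lin F.1 (lat R z).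
  by rewrite lin_lat ler_int; have := z_gt F HF; lia.
rewrite -[y](subrK (lat R z)) linD; move: zF; rewrite rmorphD rmorphN rmorphM /=; lra.
Qed.

Lemma interior_dil_latP (t : int) z : 0 < t ->
  interior (dil t%:~R P) (lat R z) <-> forall F, F \in Fs -> - (t * F.2) < ilin F.1 z.
Proof.
move=> t_gt0; split; last exact: ilin_gt_interior_dil.
move=> z_int F HF; have tR_ge0 : (0 : R) <= t%:~R by rewrite ler0z ltW.
have := interior_lin_gt (primitive_neq0 (Fs_primitive HF)) (fun y => dil_lin_ge tR_ge0 ^~ HF) z_int.
by rewrite lin_lat -rmorphM -rmorphN ltr_int.
Qed.

Hypothesis facets_irredundant : forall F, F \in Fs -> exists x : 'rV[R]_d,
  lin F.1 x < - (F.2%:~R) /\ (forall G, G \in Fs -> G != F -> lin G.1 x >= - (G.2%:~R)).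
Variable x0 : 'rV[R]_d.
Hypothesis x0_interior : interior P x0.

Lemma facet_relint_point F : F \in Fs -> exists q, P q /\ lin F.1 q = - F.2%:~R /\
  forall G, G \in Fs -> G != F -> - G.2%:~R < lin G.1 q.
Proof.
move=> HF; have [xF [xF_lt xF_ge]] := facets_irredundant HF.
have x0_gt G : G \in Fs -> - G.2%:~R < lin G.1 x0.
  move=> HG; apply: (interior_lin_gt (primitive_neq0 (Fs_primitive HG)) _ x0_interior) => y Py.
  exact: (proj1 (P_ineq y)) Py G HG.
pose al := lin F.1 x0 + F.2%:~R; pose be := - F.2%:~R - lin F.1 xF.
have al_gt0 : 0 < al by have := x0_gt F HF; rewrite /al; lra.
have be_gt0 : 0 < be by rewrite /be; lra.
have albe_neq0 : al + be != 0 by rewrite gt_eqF // addr_gt0.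
pose q := (be / (al + be)) *: x0 + (al / (al + be)) *: xF.
have lin_q G : lin G.1 q = be / (al + be) * lin G.1 x0 + al / (al + be) * lin G.1 xF.
  by rewrite linD !linZ.
have c1_gt0 : 0 < be / (al + be) by rewrite divr_gt0 // addr_gt0.
have c2_gt0 : 0 < al / (al + be) by rewrite divr_gt0 // addr_gt0.
have c_sum1 : be / (al + be) + al / (al + be) = 1 by rewrite -mulrDl addrC mulfV.
have qF : lin F.1 q = - F.2%:~R by rewrite lin_q; move: albe_neq0; rewrite /al /be => ?; field.
have qG G : G \in Fs -> G != F -> - G.2%:~R < lin G.1 q.
  move=> HG GF; rewrite lin_q; have := x0_gt G HG; have := xF_ge G HG GF.
  move: c1_gt0 c2_gt0 c_sum1; set c1 := be / _; set c2 := al / _; nra.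
exists q; split => //; apply/P_ineq => G HG.
by case: (G =P F) => [->|/eqP GF]; [rewrite qF | exact/ltW/qG].
Qed.

Variable V : seq 'rV[int]_d.
Hypothesis P_conv : forall x, P x <-> conv (fun y => exists2 v, v \in V & y = lat R v) x.

Lemma vertex_in_polytope v : v \in V -> P (lat R v).
Proof.
move=> Vv; apply/P_conv; exists 1%N, (fun _ => lat R v), (fun _ => 1).
split; first by exists v.
by split=> [_|]; [exact: ler01 | split; rewrite big_ord1 ?scale1r].
Qed.

Lemma facet_lattice_sum F : F \in Fs -> exists u (c : int), 0 < c /\
  ilin F.1 u = - (c * F.2) /\ forall G, G \in Fs -> G != F -> - (c * G.2) < ilin G.1 u.
Proof.
move=> HF; have [q [Pq [qF qG]]] := facet_relint_point HF.
have [m [v [l [Vv [l_ge0 [l_sum1 qE]]]]]] := conv_lattice (proj1 (P_conv q) Pq).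
have slackE G : lin G.1 q + G.2%:~R = \sum_i l i * (ilin G.1 (v i) + G.2)%:~R.
  have -> : G.2%:~R = \sum_i l i * G.2%:~R :> R by rewrite -mulr_suml l_sum1 mul1r.
  rewrite qE lin_sum -big_split.
  by apply: eq_bigr => i _; rewrite lin_lat rmorphD mulrDr.
have slack0E G : G \in Fs -> (lin G.1 q + G.2%:~R == 0) =
    [forall i, (0 < l i) ==> (ilin G.1 (v i) + G.2 == 0)].
  move=> HG; rewrite slackE psumr_weighted_eq0 // => [|i].
    by apply: eq_forallb => i; rewrite intr_eq0.
  by rewrite ler0z; apply/lat_slack_ge0/HG/vertex_in_polytope.
have /forallP slackF0 : [forall i, (0 < l i) ==> (ilin F.1 (v i) + F.2 == 0)].
  by rewrite -slack0E // qF addNr.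
have slackG_pos G : G \in Fs -> G != F -> exists2 i, 0 < l i & 0 < ilin G.1 (v i) + G.2.
  move=> HG GF; have : ~~ [forall i, (0 < l i) ==> (ilin G.1 (v i) + G.2 == 0)].
    by rewrite -slack0E // lt0r_neq0 //; have := qG G HG GF; lra.
  move=> /forallPn [i]; rewrite negb_imply => /andP[li si]; exists i => //.
  by rewrite lt0r si; apply/lat_slack_ge0/HG/vertex_in_polytope.
have [i0 _ li0] : exists2 i, i \in index_enum 'I_m & 0 < l i.
  have /sum_neq0_exists [i ? li] : \sum_i l i != 0 by rewrite l_sum1 oner_neq0.
  by exists i; rewrite // lt0r li l_ge0.
pose u := \sum_(i | 0 < l i) v i; pose c : int := \sum_(i | 0 < l i) 1.
have uE G : ilin G.1 u + c * G.2 = \sum_(i | 0 < l i) (ilin G.1 (v i) + G.2).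
  rewrite ilin_sum big_split /= mulr_suml; congr (_ + _).
  by apply: eq_bigr => i _; rewrite mul1r.
exists u, c; split; first by rewrite /c (bigD1 i0) //= ltr_pwDl ?sumr_ge0.
split.
  apply/eqP; rewrite -subr_eq0 opprK uE big1 // => i li.
  exact/eqP/(implyP (slackF0 i)).
move=> G HG GF; have [i li si] := slackG_pos G HG GF.
rewrite -subr_gt0 opprK uE (bigD1 i) //= ltr_pwDl //; apply: sumr_ge0 => j _.
by apply/lat_slack_ge0/HG/vertex_in_polytope.
Qed.

Lemma facet_level_one F : F \in Fs -> exists y (t : int), 0 < t /\
  ilin F.1 y = - (t * F.2) + 1 /\ forall G, G \in Fs -> - (t * G.2) < ilin G.1 y.
Proof.
move=> HF; have [u [c [c_gt0 [uF uG]]]] := facet_lattice_sum HF.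
have [w wF] := primitive_ilin_eq1 (Fs_primitive HF).
pose M : int := 1 + \sum_(G <- Fs) `|ilin G.1 w|.
have M_gt G : G \in Fs -> `|ilin G.1 w| < M.
  move=> HG; rewrite /M ltz1D.
  by apply: (ler_sum_mem (f := fun G : 'rV[int]_d * int => `|ilin G.1 w|)).
have M_gt0 : 0 < M by have := M_gt F HF; have := normr_ge0 (ilin F.1 w); lia.
exists (M *: u + w), (M * c); split; first exact: mulr_gt0.
split; first by rewrite ilinD ilinZ uF wF mulrN mulrA.
move=> G HG; rewrite ilinD ilinZ; case: (G =P F) => [->|/eqP GF].
  by rewrite uF wF mulrN mulrA ltrDl.
have := M_gt G HG; have := lerNnormlW (lexx `|ilin G.1 w|); have := uG G HG GF; nia.
Qed.

End Polytope.

Section Monomials.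
Variables (R : realType) (d : nat) (P : 'rV[R]_d -> Prop).

(* A key e stands for the Laurent monomial t^e.1 s^e.2: [canonical_key e] says that
   it lies in omega, [multiplies_canonical u] that t^u.1 s^u.2 omega lies in A(P). *)
Definition canonical_key (e : key d) : Prop :=
  0 < e.2 /\ interior (dil e.2%:~R P) (lat R e.1).

Definition multiplies_canonical (u : key d) : Prop := forall E, canonical_key E ->
  0 <= (u + E).2 /\ dil (u + E).2%:~R P (lat R (u + E).1).

End Monomials.

Section EhrhartRing.
Variables (k : fieldType) (d : nat) (R : realType) (P : 'rV[R]_d -> Prop).
Local Notation L := (laurent k d).
Local Notation K := (key d).

Section Lift.
Variables (M : lmodType k) (h : K -> M).

Lemma fglift0 : fglift h (0 : L) = 0.
Proof. by have := lift_is_additive h 0 0; rewrite subrr => ->; rewrite subrr. Qed.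

Lemma fgliftD (f g : L) : fglift h (f + g) = fglift h f + fglift h g.
Proof.
have fgliftN (y : L) : fglift h (- y) = - fglift h y.
  by rewrite -sub0r lift_is_additive fglift0 sub0r.
by have := lift_is_additive h f (- g); rewrite opprK => ->; rewrite fgliftN opprK.
Qed.

Lemma fglift_sumE (g : L) : fglift h g = \sum_(z <- dom g) coeff z g *: h z.
Proof.
rewrite -{1}(freeg_sumE g) (big_morph (fglift h) fgliftD fglift0).
by apply: eq_bigr => z _; rewrite liftU.
Qed.

End Lift.

Lemma scaleU (c : k) (z : K) : c *: (<< z >> : L) = << c *g z >>.
Proof. by apply/eqP/freeg_eqP => x; rewrite coeffZ !coeffU mul1r. Qed.

Lemma lmulU (a : K) (g : L) : lmul << a >> g = fglift (fun b => << a + b >> : L) g.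
Proof. by rewrite /lmul liftU scale1r. Qed.

Lemma lmulUU (a b : K) : lmul << a >> << b >> = << a + b >> :> L.
Proof. by rewrite lmulU liftU scale1r. Qed.

Lemma coeff_lmulU (a c : K) (g : L) : coeff (c + a) (lmul << a >> g) = coeff c g.
Proof.
rewrite lmulU fglift_sumE -[in RHS](freeg_sumE g) !raddf_sum.
apply: eq_bigr => z _ /=; rewrite coeffZ !coeffU mul1r.
by rewrite (addrC a) (inj_eq (addIr a)).
Qed.

Lemma lmul_scalar (c : k) (g : L) : lmul << c *g 0 >> g = c *: g.
Proof.
rewrite /lmul liftU fglift_sumE; congr (_ *: _).
by rewrite -[in RHS](freeg_sumE g); apply: eq_bigr => -[z1 z2] _ /=; rewrite !add0r scaleU.
Qed.

Lemma in_canonicalU (c : k) (z : K) : canonical_key P z -> in_canonical P << c *g z >>.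
Proof.
move=> zc e; have [->|c_neq0] := eqVneq c 0; first by rewrite freegU0 dom0.
by rewrite domU // inE => /eqP ->.
Qed.

Lemma in_canonical_sum (r : seq K) (F : K -> L) :
  (forall z, z \in r -> in_canonical P (F z)) -> in_canonical P (\sum_(z <- r) F z).
Proof.
move=> F_can; rewrite big_seq; apply: big_ind => // [e|f g f_can g_can e].
  by rewrite dom0.
by move/domD_subset; rewrite mem_cat => /orP[/f_can|/g_can].
Qed.

Lemma in_canonical_ehrhart (f : L) : in_canonical P f -> in_ehrhart P f.
Proof. by move=> f_can e /f_can [e_gt0 e_int]; split; [exact: ltW | exact: interior_mem]. Qed.

Lemma in_ehrhart_scalar x0 (c : k) : P x0 -> in_ehrhart P << c *g 0 >>.
Proof.
move=> Px0 e; have [->|c_neq0] := eqVneq c 0; first by rewrite freegU0 dom0.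
rewrite domU // inE => /eqP -> /=; split=> //; exists x0; split=> //.
by rewrite scale0r; apply/matrixP => i j; rewrite !mxE.
Qed.

Section Homomorphism.
Variable phi : L -> L.
Hypothesis phi_hom : is_hom_canonical P phi.

Lemma hom_canonical_sum (r : seq K) (F : K -> L) :
  (forall z, z \in r -> in_canonical P (F z)) ->
  phi (\sum_(z <- r) F z) = \sum_(z <- r) phi (F z).
Proof.
have [_ [phiD _]] := phi_hom.
elim: r => [|z r IHr] F_can.
  have can0 : in_canonical P (0 : L) by move=> e; rewrite dom0.
  by rewrite !big_nil; apply: (addrI (phi 0)); rewrite -phiD // !addr0.
have F_can_r z' : z' \in r -> in_canonical P (F z') by move=> ?; apply/F_can/mem_behead.
rewrite !big_cons phiD ?IHr //; first exact/F_can/mem_head.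
exact: in_canonical_sum.
Qed.

Lemma hom_canonical_freeg x0 (w : L) : P x0 -> in_canonical P w ->
  phi w = \sum_(z <- dom w) coeff z w *: phi << z >>.
Proof.
have [_ [_ phi_lin]] := phi_hom.
move=> Px0 w_can; rewrite -{1}(freeg_sumE w) hom_canonical_sum => [|z /w_can zc].
  apply: eq_big_seq => z /w_can zc; rewrite -scaleU -!lmul_scalar phi_lin //.
    exact: in_ehrhart_scalar Px0.
  exact: in_canonicalU.
exact: in_canonicalU.
Qed.

Lemma hom_canonical_multiplies (z X : K) : canonical_key P z ->
  coeff X (phi << z >>) != 0 -> multiplies_canonical P (X - z).
Proof.
have [phi_ehr [_ phi_lin]] := phi_hom.
move=> /(in_canonicalU (c := 1)) z_can Xz E /(in_canonicalU (c := 1)) E_can.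
apply: (phi_ehr _ E_can); rewrite mem_dom.
have comm : lmul << E >> (phi << z >>) = lmul << z >> (phi << E >>).
  rewrite -(phi_lin _ _ (in_canonical_ehrhart E_can) z_can).
  by rewrite -(phi_lin _ _ (in_canonical_ehrhart z_can) E_can) !lmulUU addrC.
rewrite -(coeff_lmulU z) -comm.
have -> : X - z + E + z = X + E by rewrite -addrA (addrC E) addrA subrK.
by rewrite coeff_lmulU.
Qed.

End Homomorphism.

Lemma nearly_gorenstein_factor x0 v : P x0 -> nearly_gorenstein k P -> P (lat R v) ->
  exists z, canonical_key P z /\ multiplies_canonical P ((v, 1%:Z) - z).
Proof.
move=> Px0 NG Pv.
have v_max : in_maxideal P (<< (v, 1%:Z) >> : L).
  split=> e; rewrite domU1 inE => /eqP -> //.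
  by split=> //; exists (lat R v); rewrite scale1r.
have [n [phi [w [phiw_hom vE]]]] := NG _ v_max.
have : coeff (v, 1%:Z) (\sum_(i < n) phi i (w i)) != 0.
  by rewrite -vE coeffU eqxx mulr1 oner_neq0.
rewrite raddf_sum => /sum_neq0_exists [i _].
have [phi_hom w_can] := phiw_hom i.
rewrite (hom_canonical_freeg phi_hom Px0 w_can) raddf_sum => /sum_neq0_exists [z zw].
rewrite /= coeffZ mulf_eq0 negb_or => /andP[_ vz].
have zc : canonical_key P z by exact: w_can.
have zv := hom_canonical_multiplies phi_hom zc vz.
by exists z.
Qed.

End EhrhartRing.

Section Decomposition.
Variables (R : realType) (d : nat) (P : 'rV[R]_d -> Prop).
Variables (Fs : seq ('rV[int]_d * int)) (a : nat).
Hypothesis P_ineq : forall x, P x <-> (forall F, F \in Fs -> lin F.1 x >= - (F.2%:~R)).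
Hypothesis Fs_primitive : forall F, F \in Fs -> primitive F.1.
Hypothesis P_codegree : is_codegree P a.

Lemma mink_floor_remainder_sub x :
  mink (floor_poly (dil a%:R P)) (remainder_poly Fs a) x -> P x.
Proof.
have a_gt0 : 0 < a%:Z by case: P_codegree; rewrite ltz_nat.
case=> y [r [y_floor [r_rem ->]]]; apply/P_ineq => F HF.
have y_ge : (- (a%:Z * F.2) + 1)%:~R <= lin F.1 y.
  apply: (conv_lin_ge y_floor) => _ [z [z_int ->]]; rewrite lin_lat ler_int.
  by have := proj1 (interior_dil_latP P_ineq Fs_primitive z a_gt0) z_int F HF; lia.
have r_ge : ((a%:Z - 1) * F.2 - 1)%:~R <= lin F.1 r.
  by apply: (conv_lin_ge r_rem) => _ [z [-> z_rem]]; exact: z_rem.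
have := lerD y_ge r_ge; rewrite -rmorphD linD.
have -> : - (a%:Z * F.2) + 1 + ((a%:Z - 1) * F.2 - 1) = - F.2 by ring.
by rewrite rmorphN.
Qed.

Hypothesis Fs_level_one : forall F, F \in Fs -> exists y (t : int), 0 < t /\
  ilin F.1 y = - (t * F.2) + 1 /\ forall G, G \in Fs -> - (t * G.2) < ilin G.1 y.

Lemma lattice_point_decomposition v z : P (lat R v) ->
  canonical_key P z -> multiplies_canonical P ((v, 1%:Z) - z) ->
  exists y r, interior (dil a%:R P) (lat R y) /\
    (forall F, F \in Fs -> ((a%:Z - 1) * F.2 - 1)%:~R <= lin F.1 (lat R r)) /\ v = y + r.
Proof.
move: z => [z1 [j|j]] Pv [/= j_gt0 z_int] zv //.
have [a_ge1 [[za za_int] a_min]] := P_codegree.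
have a_le_j : (a <= j)%N.
  rewrite leqNgt; apply/negP => j_lt_a; apply: (a_min j); last by exists z1.
  by rewrite j_lt_a andbT -ltz_nat.
have a_gt0 : 0 < a%:Z by rewrite ltz_nat.
have [a_ge0 a_dil] := zv (za, a%:Z) (conj a_gt0 za_int).
have j_le_a1 : (j <= a.+1)%N by move: a_ge0 => /=; lia.
have r_ge F : F \in Fs -> (j%:Z - 1) * F.2 - 1 <= ilin F.1 (v - z1).
  move=> HF; have [yF [t [t_gt0 [yF_F yF_G]]]] := Fs_level_one HF.
  have [t_ge0 t_dil] := zv (yF, t) (conj t_gt0 (ilin_gt_interior_dil P_ineq t_gt0 yF_G)).
  move: t_ge0 t_dil => /= t_ge0 t_dil.
  have := dil_lin_ge P_ineq _ t_dil HF; rewrite ler0z => /(_ t_ge0).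
  by rewrite lin_lat -rmorphM -rmorphN ler_int ilinD yF_F; lra.
have [j_eq|j_eq] : j = a \/ j = a.+1 by lia.
  exists z1, (v - z1); split; first by rewrite -j_eq.
  split; last by rewrite addrC subrK.
  by move=> F HF; rewrite lin_lat ler_int -j_eq; exact: r_ge.
(* j = a + 1: the test point is then in 0 P = {0}, so z.1 = v + za. *)
have c0 : ((v, 1%:Z) - (z1, j%:Z) + (za, a%:Z)).2 = 0 by rewrite /= j_eq; lia.
move: a_dil; rewrite c0 => /dil0_eq0; rewrite -(lat0 R) => /lat_inj /= za_v.
have z1_v : v - z1 = - za by apply/eqP; rewrite -addr_eq0 za_v.
exists za, (v - za); split => //; split; last by rewrite addrC subrK.
move=> F HF; rewrite lin_lat ler_int.
have := r_ge F HF; have := lat_slack_ge0 P_ineq Pv HF.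
rewrite z1_v ilinN ilinB j_eq; lra.
Qed.

End Decomposition.

Unset Implicit Arguments.
Set Strict Implicit.

Theorem proposition3p5 (k : fieldType) (R : realType) (d : nat)
    (P : 'rV[R]_d -> Prop) (Fs : seq ('rV[int]_d * int)) (a : nat) :
  infinite_field k ->
  lattice_polytope P ->
  full_dimensional P ->
  facet_presentation P Fs ->
  is_codegree P a ->
  nearly_gorenstein k P ->
  forall x : 'rV[R]_d,
    P x <-> mink (floor_poly (dil a%:R P)) (remainder_poly Fs a) x.
Proof.
move=> _ [V P_conv] [x0 x0_int] [P_ineq [Fs_prim Fs_irr]] P_codeg NG x.
split; last exact: mink_floor_remainder_sub.
have level_one := facet_level_one P_ineq Fs_prim Fs_irr x0_int P_conv.
move/P_conv; apply: conv_mink_sub => _ [v Vv ->].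
have Pv := vertex_in_polytope P_conv Vv.
have [z [zc zv]] := nearly_gorenstein_factor (interior_mem x0_int) NG Pv.
have [y [r [y_int [r_rem ->]]]] :=
  lattice_point_decomposition P_ineq P_codeg level_one Pv zc zv.
exists (lat R y), (lat R r); rewrite latD; split; first by exists y.
by split => //; exists r.
Qed.
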